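(* Let $n$ be an even positive integer, and let $a,b$ be distinct integers with $0<a,b<n$, $a$ even and $b$ odd, so that $G=C_{2n}(a,b,n)$ is a $5$-regular circulant graph. Then $G$ admits a factorization (in the sense described in the context) as a Cartesian product of a $3$-regular circulant graph and a $2$-regular circulant graph if and only if there exist positive integers $p,q$ with $p>2$, $1<q<n$, $p\mid a$, $q\mid b$, $pq=2n$ and $\gcd(p,q)=1$.
   Context: For an integer $m$ and a set $R$ of positive integers each at most $m/2$, the circulant graph $C_m(R)$ has vertex set $\{0,1,\dots,m-1\}$, with $i$ and $j$ adjacent iff $\min(|i-j|,\,m-|i-j|)\in R$; it is regular of degree $2|R|$ if $m/2\notin R$ and of degree $2|R|-1$ if $m/2\in R$. $C_{2n}(a,b,n)$ denotes the circulant graph on $2n$ vertices with jump set $\{a,b,n\}$. The Cartesian product $G_1\square G_2$ has vertex set $V(G_1)\times V(G_2)$, with $(u_1,v_1)\sim(u_2,v_2)$ iff either $u_1=u_2$ and $v_1v_2\in E(G_2)$, or $v_1=v_2$ and $u_1u_2\in E(G_1)$. The factorization theorem for circulant graphs states: if $p,q$ are relatively prime, $R\subseteq[1,p/2]$, $S\subseteq[1,q/2]$ and $T=qR\cup pS$ (where $qR=\{qr:r\in R\}$, $pS=\{ps:s\in S\}$), then $C_{pq}(T)\cong C_p(R)\square C_q(S)$. ''$G=C_{2n}(a,b,n)$ admits a factorization as a Cartesian product of a $3$-regular and a $2$-regular circulant graph'' means: there exist relatively prime integers $p,q>1$ with $pq=2n$ and sets of integers $R\subseteq[1,p/2]$,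 $S\subseteq[1,q/2]$ with $qR\cup pS=\{a,b,n\}$, such that $C_p(R)$ is $3$-regular and $C_q(S)$ is $2$-regular (so that $G\cong C_p(R)\square C_q(S)$ by the factorization theorem). *)

From mathcomp Require Import all_boot.
Set Implicit Arguments. Unset Strict Implicit. Unset Printing Implicit Defensive.

(* Circulant graph C_m(R): vertices {0,...,m-1} = 'I_m; jump set R given as a
   (finite) sequence of naturals, read as a set via membership. *)
Definition circ_dist (i j : nat) : nat := if i <= j then j - i else i - j.

Definition circ_adj (m : nat) (R : seq nat) (i j : 'I_m) : bool :=
  minn (circ_dist i j) (m - circ_dist i j) \in R.

Definition circ_regular (m : nat) (R : seq nat) (k : nat) : Prop :=
  forall i : 'I_m, #|[set j : 'I_m | circ_adj R i j]| = k.

Definition admits_3_2_factorization (n a b : nat) : Prop :=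
  exists (p q : nat) (R S : seq nat),
    [/\ [/\ 1 < p, 1 < q, coprime p q & p * q = 2 * n],
        all (fun r => (1 <= r) && (r * 2 <= p)) R /\
        all (fun s => (1 <= s) && (s * 2 <= q)) S,
        (map (fun r => q * r) R ++ map (fun s => p * s) S) =i [:: a; b; n],
        circ_regular p R 3
      & circ_regular q S 2].

From mathcomp Require Import all_boot zify.

Set Implicit Arguments.
Unset Strict Implicit.
Unset Printing Implicit Defensive.

(* The number of vertices at circular distance [d] from a vertex
   of [C_m] is 2, or 1 when [2d = m]; so the degree of [C_m(R)] is odd only if
   [m/2] is a jump, whence the 3-regular factor [C_p(R)] has [p] even, and then
   [q] is odd by coprimality.  Comparing parities in [qR ∪ pS = {a, b, n}]
   forces the odd [b] into [qR] and, since [pq = 2n] with [q] odd, forces [a]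
   into [pS].  Conversely, for [p = 2h] the jump sets [R = {b/q, h}] and
   [S = {a/p}] give the factorization [C_{2h}(b/q, h) □ C_q(a/p)]. *)

Definition circ_norm (m i j : nat) : nat := minn (circ_dist i j) (m - circ_dist i j).

Definition jump_set (m : nat) (R : seq nat) : bool :=
  all (fun r => (1 <= r) && (r * 2 <= m)) R.

Lemma card_circ_sphere m (i : 'I_m) d : 0 < d -> d * 2 <= m ->
  #|[set j : 'I_m | circ_norm m i j == d]| = (d * 2 != m).+1.
Proof.
move=> d_gt0 d_le; case: m i d_le => [|m] i d_le; first by case: i.
have i_lt := ltn_ord i.
(* the two vertices [i + d] and [i - d] (mod m), equal iff [2d = m] *)
set x := if i + d < m.+1 then i + d else i + d - m.+1.
set y := if d <= i then i - d else i + m.+1 - d.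
have x_lt : x < m.+1 by rewrite /x; case: ifP => ?; lia.
have y_lt : y < m.+1 by rewrite /y; case: ifP => ?; lia.
have -> : [set j : 'I_m.+1 | circ_norm m.+1 i j == d] = [set inord x; inord y].
  apply/setP => j; rewrite !inE -!val_eqE /= !inordK //.
  have j_lt := ltn_ord j.
  rewrite /circ_norm /circ_dist /x /y; case: ifP; case: ifP; case: ifP => ? ? ?.
  1-8: by apply/idP/idP; lia.
rewrite cards2 -val_eqE /= !inordK // /x /y.
by case: ifP; case: ifP => ? ?; lia.
Qed.

Lemma card_circ_norm_in m (i : 'I_m) L : uniq L -> jump_set m L ->
  #|[set j : 'I_m | circ_norm m i j \in L]| = \sum_(d <- L) (d * 2 != m).+1.
Proof.
elim: L => [|d L IHL] /=.
  by move=> _ _; rewrite big_nil; apply: eq_card0 => j; rewrite !inE.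
move=> /andP[dNL uniqL] /andP[/andP[d_gt0 d_le] jumpL].
rewrite big_cons -IHL // -(card_circ_sphere i d_gt0 d_le).
rewrite -cardsUI; set I := _ :&: _.
have -> : I = set0.
  by apply/setP => j; rewrite !inE; case: eqP => // ->; rewrite (negbTE dNL).
rewrite cards0 addn0; apply: eq_card => j.
by rewrite !inE.
Qed.

Lemma circ_degree m R (i : 'I_m) : jump_set m R ->
  #|[set j | circ_adj R i j]| = \sum_(d <- undup R) (d * 2 != m).+1.
Proof.
move=> jumpR; rewrite -(card_circ_norm_in i (undup_uniq R)).
  by apply: eq_card => j; rewrite !inE /circ_adj mem_undup.
by apply/allP => d; rewrite mem_undup; apply: (allP jumpR).
Qed.

Lemma circ_regular_odd m R k : jump_set m R -> circ_regular m R k -> odd k ->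
  ~~ odd m.
Proof.
move=> jumpR regR odd_k; have [->//|m_gt0] := posnP m.
move: odd_k; rewrite -(regR (Ordinal m_gt0)) circ_degree //.
elim: (undup R) => [|d L IHL]; first by rewrite big_nil.
rewrite big_cons; have [<- _|_] := eqP; first by rewrite oddM andbF.
by rewrite oddD /=.
Qed.

Lemma circ_regular_lt m R k : 0 < m -> jump_set m R -> circ_regular m R k ->
  k < m.
Proof.
move=> m_gt0 jumpR regR; pose i := Ordinal m_gt0.
have : [set j | circ_adj R i j] \subset [set~ i].
  apply/subsetP => j; rewrite !inE; apply: contraTneq => ->.
  rewrite /circ_adj /circ_dist leqnn subnn min0n.
  by apply/negP => /(allP jumpR).
by move/subset_leq_card; rewrite regR cardsC1 card_ord; lia.
Qed.

Lemma circ_regular_nil m k : 0 < m -> circ_regular m [::] k -> k = 0.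
Proof.
move=> m_gt0 /(_ (Ordinal m_gt0)) <-.
by apply: eq_card0 => j; rewrite !inE.
Qed.

Lemma circ_regular_single q s : 0 < s -> s * 2 < q -> circ_regular q [:: s] 2.
Proof.
move=> s_gt0 s_lt i; rewrite circ_degree /= ?s_gt0 ?(ltnW s_lt) //.
by rewrite big_seq1 neq_ltn s_lt.
Qed.

Lemma circ_regular_with_half h r : 0 < r -> r < h ->
  circ_regular (h * 2) [:: r; h] 3.
Proof.
move=> r_gt0 r_lt i.
rewrite circ_degree /=; last by rewrite andbT; lia.
by rewrite inE (ltn_eqF r_lt) big_cons big_seq1 eqxx eqn_mul2r (ltn_eqF r_lt).
Qed.

Definition coprime_divisor_split (n a b : nat) : Prop :=
  exists p q : nat,
    [/\ 0 < p, 0 < q, 2 < p & 1 < q < n] /\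
    [/\ p %| a, q %| b, p * q = 2 * n & coprime p q].

Lemma admits_3_2_factorization_split n a b : 0 < b < n -> odd b ->
  admits_3_2_factorization n a b -> coprime_divisor_split n a b.
Proof.
move=> /andP[b_gt0 b_lt] odd_b.
case=> p [q [R [S [[p_gt1 q_gt1 copq pq] [jumpR jumpS] jumpsE regR regS]]]].
have even_p : ~~ odd p := circ_regular_odd jumpR regR isT.
have odd_q : odd q by rewrite -coprime2n (coprime_dvdl _ copq) // dvdn2.
have p_gt3 : 3 < p := circ_regular_lt (ltnW p_gt1) jumpR regR.
have [s sS] : exists s, s \in S.
  case: S jumpS jumpsE regS => [|s S] _ _ regS; last by exists s; rewrite inE eqxx.
  by have := circ_regular_nil (ltnW q_gt1) regS.
have p_dvd_a : p %| a.
  have : p * s \in [:: a; b; n] by rewrite -jumpsE mem_cat map_f ?orbT.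
  rewrite !inE => /or3P[/eqP <-|/eqP psE|/eqP psE]; first exact: dvdn_mulr.
  - by move: odd_b; rewrite -psE oddM (negbTE even_p).
  - have q_eq : q = s * 2 by nia.
    by move: odd_q; rewrite q_eq muln2 odd_double.
have q_dvd_b : q %| b.
  have : b \in [:: a; b; n] by rewrite !inE eqxx orbT.
  rewrite -jumpsE mem_cat => /orP[/mapP[r _ ->]|/mapP[s' _ bE]].
  - exact: dvdn_mulr.
  - by move: odd_b; rewrite bE oddM (negbTE even_p).
have := dvdn_leq b_gt0 q_dvd_b.
by exists p, q; split; split => //; lia.
Qed.

Lemma coprime_divisor_split_admits n a b : 0 < a < n -> 0 < b < n -> odd b ->
  coprime_divisor_split n a b -> admits_3_2_factorization n a b.
Proof.
move=> /andP[a_gt0 a_lt] /andP[b_gt0 b_lt] odd_b.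
case=> p [q [[p_gt0 q_gt0 p_gt2 /andP[q_gt1 q_lt]] [/dvdnP[s aE] /dvdnP[r bE] pq copq]]].
have odd_q : odd q by move: odd_b; rewrite bE oddM => /andP[].
have even_p : ~~ odd p.
  by apply/negP => odd_p; move: (congr1 odd pq); rewrite oddM odd_p odd_q mul2n odd_double.
have [h pE] : exists h, p = h * 2.
  by exists p./2; rewrite muln2 -{1}(odd_double_half p) (negbTE even_p).
have nE : n = q * h by nia.
have r_lt : r < h by nia.
have s_lt : s * 2 < q by nia.
exists p, q, [:: r; h], [:: s]; split => //=.
- by split => //; lia.
- by split; rewrite /= !andbT; nia.
- rewrite -[q * r]mulnC -bE -nE [p * s]mulnC -aE.
  exact: (mem_rot 1 [:: a; b; n]).
- by rewrite pE; apply: circ_regular_with_half; lia.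
- by apply: circ_regular_single; lia.
Qed.

Theorem theorem31 (n a b : nat) :
  0 < n -> ~~ odd n ->
  a != b -> 0 < a < n -> 0 < b < n -> ~~ odd a -> odd b ->
  admits_3_2_factorization n a b <->
  (exists p q : nat,
     [/\ 0 < p, 0 < q, 2 < p & 1 < q < n] /\
     [/\ p %| a, q %| b, p * q = 2 * n & coprime p q]).
Proof.
(* neither direction needs [n] even, [a] even or [a != b] *)
move=> _ _ _ a_range b_range _ odd_b; split.
- exact: admits_3_2_factorization_split.
- exact: coprime_divisor_split_admits.
Qed.
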